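(* For online Facility Location with $\Delta$-MRF arrivals, there are instances (with $\Delta\to\infty$) for which no online algorithm is better than $\Omega(\Delta/\log\Delta)$-competitive.
   Context: Facility Location: clients (demands) are points of a metric space; a solution opens facilities at points (each with an opening cost) and connects each client to an open facility at cost equal to their distance; cost is total opening plus connection cost. Online: clients arrive one by one and after each arrival the algorithm irrevocably opens facilities/makes connections so all clients so far are served. $\Delta$-MRF arrivals: the sequence of $n$ clients $Y=(Y_1,\dots,Y_n)$ is drawn from a known distribution on $\Omega_1\times\dots\times\Omega_n$ of the form $\Pr[u]\propto\exp(\sum_i\psi_i(u_i)+\sum_{e\in E'}\psi_e((u_j)_{j\in e}))$ for a hypergraph $E'\subseteq2^{[n]}$ and potentials, whose weighted maximum degree $\max_i\max_u|\sum_{e\ni i}\psi_e((u_j)_{j\in e})|$ is $\Delta$. An algorithm is $\alpha$-competitive if $\mathbb{E}[\mathrm{ALG}(Y)]\le\alpha\,\mathbb{E}[\mathrm{OPT}(Y)]$. *)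

From HB Require Import structures.
From mathcomp Require Import all_boot all_order all_algebra.
From mathcomp Require Import all_classical all_reals all_analysis.
Set Implicit Arguments. Unset Strict Implicit. Unset Printing Implicit Defensive.
Import Order.TTheory GRing.Theory Num.Theory.
Local Open Scope ring_scope.

Section FL.
Variables (R : realType) (T : finType) (n : nat).

Notation arrivals := {ffun 'I_n -> T}.

Definition is_metric (d : T -> T -> R) : Prop :=
  [/\ (forall x y, 0 <= d x y),
      (forall x y, d x y = 0 <-> x = y),
      (forall x y, d x y = d y x) &
      (forall x y z, d x z <= d x y + d y z)].

(* After the arrival of client t it has
   opened the (cumulative) set [opened u t] of facilities and irrevocably
   connected client t to [conn u t]; both may depend only on u_0 ... u_t. *)
Record online_alg := OnlineAlg {
  opened : arrivals -> 'I_n -> {set T};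
  conn : arrivals -> 'I_n -> T;
  alg_causal : forall (u v : arrivals) (t : 'I_n),
    (forall s : 'I_n, (s <= t)%N -> u s = v s) ->
    opened u t = opened v t /\ conn u t = conn v t;
  alg_monotone : forall u (s t : 'I_n), (s <= t)%N -> opened u s \subset opened u t;
  alg_served : forall u t, conn u t \in opened u t }.

Variables (d : T -> T -> R) (f : T -> R).

Definition alg_cost (A : online_alg) (u : arrivals) : R :=
  \sum_(x in \bigcup_(t : 'I_n) opened A u t) f x
  + \sum_(t : 'I_n) d (u t) (conn A u t).

Definition sol_cost (u sigma : arrivals) : R :=
  \sum_(x in [set sigma t | t : 'I_n]) f x + \sum_(t : 'I_n) d (u t) (sigma t).

(* Offline optimum: minimum over all assignments (the seed value u itself is
   one of the assignments, so this is the true minimum).  Opening extra unused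
   facilities never helps since f >= 0. *)
Definition opt_cost (u : arrivals) : R :=
  \big[Num.min/sol_cost u u]_(sigma : arrivals) sol_cost u sigma.

(* Markov random field: supports Om i, unary potentials psi1, hypergraph E,
   hyperedge potentials psiE e (depending only on the coordinates in e). *)
Variables (Om : 'I_n -> {set T}) (psi1 : 'I_n -> T -> R)
          (E : {set {set 'I_n}}) (psiE : {set 'I_n} -> arrivals -> R).

Definition psi_local : Prop :=
  forall (e : {set 'I_n}) (u v : arrivals), (forall j, j \in e -> u j = v j) -> psiE e u = psiE e v.

Definition in_support (u : arrivals) : bool := [forall i, u i \in Om i].

Definition mrf_weight (u : arrivals) : R :=
  if in_support u then expR (\sum_i psi1 i (u i) + \sum_(e in E) psiE e u) else 0.

Definition mrf_prob (u : arrivals) : R :=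
  mrf_weight u / \sum_(v : arrivals) mrf_weight v.

Definition mrf_expect (g : arrivals -> R) : R :=
  \sum_(u : arrivals) mrf_prob u * g u.

Definition mrf_Delta : R :=
  \big[Num.max/0]_(i : 'I_n)
     \big[Num.max/0]_(u : arrivals | in_support u) `| \sum_(e in E | i \in e) psiE e u |.

End FL.

From HB Require Import structures.
From mathcomp Require Import all_boot all_order all_algebra.
From mathcomp Require Import all_classical all_reals all_analysis.
From mathcomp Require Import zify ring lra.
Import Order.TTheory GRing.Theory Num.Theory.
Local Open Scope ring_scope.
Set Implicit Arguments. Unset Strict Implicit. Unset Printing Implicit Defensive.

(* Points are words c : 'I_m -> 'I_m under the Hamming distance that weights letter j by
   gamma^-(j+2), gamma = m^2, and every facility costs 1.  Phase k is the time interval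
   [gamma^k, gamma^(k+1)); in the noiseless process the clients of phase k sit at the
   length-k prefix of a uniform hidden word, so the arrival sequence has independent
   increments revealing one uniform letter at each phase start.  Mixing each increment law
   with eps-uniform noise, eps = n^-2, makes all potentials finite, with
   Delta = Theta(ln (m^m / eps)) = Theta(m ln m), while noise occurs with probability at
   most n eps.

   The single facility at the hidden word serves a noiseless sequence at cost at most 3,
   so E[OPT] <= 4.  An online algorithm fixes the facilities open at the end of phase j
   before letter j is revealed, so on average they carry that letter with probability at
   most (#open)/m.  Otherwise either a facility opens during phase j+1, or its
   gamma^(j+2) - gamma^(j+1) clients each pay gamma^-(j+2), about 1 in total.  Summing
   over the m phases gives E[ALG] >= m/6 = Omega(Delta / ln Delta). *)

Lemma sum_ord_range (N a b : nat) : (a <= b)%N ->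
  (\sum_(t < N) ((a <= t) && (t < b)))%N = (minn N b - minn N a)%N.
Proof.
move=> ab; elim: N => [|N IH]; first by rewrite big_ord0 !min0n.
rewrite big_ord_recr /= IH; case: (leqP a N) => h1; case: (ltnP N b) => h2 /=; lia.
Qed.

Lemma sum_indicator {R : nzSemiRingType} (I : finType) (x : I) :
  \sum_(y : I) ((y == x)%:R : R) = 1.
Proof. by rewrite (bigD1 x) //= eqxx big1 ?addr0 // => y /negbTE ->. Qed.

Lemma exists_natS2_ge (R : realType) (x : R) : exists p : nat, x <= p.+2%:R.
Proof.
exists (Num.Def.archi_bound `|x|); set b := Num.Def.archi_bound _.
have : (b%:R : R) <= b.+2%:R by rewrite ler_nat; lia.
have := archi_boundP (normr_ge0 x); have := ler_norm x; lra.
Qed.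

Lemma bernoulli_ineq (R : realFieldType) (x : R) (k : nat) : 0 <= x <= 1 ->
  1 - k%:R * x <= (1 - x) ^+ k.
Proof.
case/andP=> x0 x1; elim: k => [|k IH]; first by rewrite expr0 mul0r subr0.
have x1' : 0 <= 1 - x by rewrite subr_ge0.
rewrite exprS; apply: le_trans (ler_wpM2l x1' IH); rewrite -natr1.
have : 0 <= k%:R * x * x by rewrite !mulr_ge0.
nra.
Qed.

Lemma ln2_ge_half (R : realType) : 1 / 2 <= ln (2 : R).
Proof.
have x0 : 0 < expR (1 / 2 : R) := expR_gt0 _.
have h : 1 - 1 / 2 <= (expR (1 / 2 : R))^-1 by rewrite -expRN expR_ge1Dx.
have xV : expR (1 / 2 : R) * (expR (1 / 2))^-1 = 1 by rewrite mulfV ?gt_eqF.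
have x2 : expR (1 / 2 : R) <= 2 by nra.
by rewrite -ler_expR lnK ?posrE.
Qed.

Section WeightedHamming.
Variables (R : realType) (I A : finType) (w : I -> R).
Hypothesis w_gt0 : forall j, 0 < w j.

Definition whamming (x y : {ffun I -> A}) : R := \sum_(j | x j != y j) w j.

Lemma whamming_ge0 x y : 0 <= whamming x y.
Proof. by apply: sumr_ge0 => j _; apply: ltW. Qed.

Lemma whamming_ge (x y : {ffun I -> A}) j : x j != y j -> w j <= whamming x y.
Proof.
by move=> xy; rewrite /whamming (bigD1 j) //= lerDl sumr_ge0 // => i _; apply: ltW.
Qed.

Lemma whammingxx x : whamming x x = 0.
Proof. by rewrite /whamming big_pred0 // => j; rewrite eqxx. Qed.

Lemma whamming_metric : is_metric whamming.
Proof.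
split=> [||x y|x y z]; first exact: whamming_ge0.
- move=> x y; split=> [dxy|->]; last exact: whammingxx.
  apply/ffunP => j; apply/eqP; apply: contraT => /whamming_ge.
  by rewrite dxy leNgt w_gt0.
- by apply: eq_bigl => j; rewrite eq_sym.
- rewrite /whamming !(big_mkcond (fun j => _ != _)) -big_split /=.
  apply: ler_sum => j _; have w0 := ltW (w_gt0 j).
  case: (eqVneq (x j) (z j)) => [_|xz]; first by rewrite addr_ge0 //; case: ifP.
  case: (eqVneq (x j) (y j)) => [xy|_]; last by rewrite lerDl; case: ifP.
  by rewrite -xy xz lerDr.
Qed.

End WeightedHamming.

Section UniformMixture.
Variables (R : realType) (T : finType) (eps : R) (g : T -> R).
Hypotheses (eps_gt0 : 0 < eps) (eps_le1 : eps <= 1).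
Hypotheses (g_ge0 : forall x, 0 <= g x) (g_sum1 : \sum_x g x = 1).

Definition mix_uniform (x : T) : R := (1 - eps) * g x + eps / #|T|%:R.

Lemma card_gt0_of_sum1 : (0 < #|T|)%N.
Proof.
rewrite lt0n; apply/negP => /eqP /card0_eq T0.
by move: g_sum1; rewrite big_pred0 // => /eqP; rewrite eq_sym oner_eq0.
Qed.

Lemma mix_uniform_ge x : eps / #|T|%:R <= mix_uniform x.
Proof. by rewrite lerDr mulr_ge0 // subr_ge0. Qed.

Lemma mix_uniform_geM x : (1 - eps) * g x <= mix_uniform x.
Proof. by rewrite lerDl divr_ge0 ?ler0n ?ltW. Qed.

Lemma mix_uniform_gt0 x : 0 < mix_uniform x.
Proof.
apply: lt_le_trans (mix_uniform_ge x).
by rewrite divr_gt0 // ltr0n card_gt0_of_sum1.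
Qed.

Lemma sum_mix_uniform : \sum_x mix_uniform x = 1.
Proof.
have cT : (#|T|%:R : R) != 0 by rewrite pnatr_eq0 -lt0n card_gt0_of_sum1.
rewrite big_split /= -mulr_sumr g_sum1 mulr1 sumr_const -(mulr_natr (eps / _)).
by rewrite mulfVK // subrK.
Qed.

Lemma mix_uniform_le1 x : mix_uniform x <= 1.
Proof.
rewrite -sum_mix_uniform (bigD1 x) //= lerDl.
by apply: sumr_ge0 => y _; apply: ltW (mix_uniform_gt0 y).
Qed.

Lemma norm_ln_mix_uniform x : `|ln (mix_uniform x)| <= ln (#|T|%:R / eps).
Proof.
have e0 : 0 < eps / #|T|%:R by rewrite divr_gt0 // ltr0n card_gt0_of_sum1.
have lnle0 : ln (mix_uniform x) <= 0 by apply: ln_le0 (mix_uniform_le1 x).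
rewrite ler0_norm // -invf_div lnV ?posrE // lerN2 ler_ln ?posrE ?mix_uniform_gt0 //.
exact: mix_uniform_ge.
Qed.

End UniformMixture.

Section IncrementChain.
Variables (R : realType) (T : finZmodType) (n : nat) (q : 'I_n.+1 -> T -> R).
Hypotheses (q_gt0 : forall t x, 0 < q t x) (q_sum1 : forall t, \sum_x q t x = 1).

Local Notation arrivals := {ffun 'I_n.+1 -> T}.
Local Notation Om := (fun _ : 'I_n.+1 => [set: T]).
Local Notation psi1 := (fun (_ : 'I_n.+1) (_ : T) => 0 : R).
Local Notation E := [set: {set 'I_n.+1}].

Definition prev (t : 'I_n.+1) : 'I_n.+1 := inord t.-1.

Lemma prevE t : prev t = t.-1 :> nat.
Proof. by rewrite inordK // (leq_ltn_trans (leq_pred _) (ltn_ord t)). Qed.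

Definition increment (u : arrivals) (t : 'I_n.+1) : T :=
  u t - (if t == ord0 then 0 else u (prev t)).

Definition chain_edge (t : 'I_n.+1) : {set 'I_n.+1} := [set prev t; t].

(* With full supports and zero unary potentials, these pair potentials on consecutive
   times define the process whose increments are independent with laws [q t]. *)
Definition chain_psi (e : {set 'I_n.+1}) (u : arrivals) : R :=
  \sum_(t | e == chain_edge t) ln (q t (increment u t)).

Definition chain_weight (u : arrivals) : R := \prod_t q t (increment u t).

Lemma chain_psi_local : psi_local chain_psi.
Proof.
move=> e u v uv; apply: eq_bigr => t /eqP et.
by rewrite /increment !uv // et !inE eqxx ?orbT.
Qed.

Lemma increment_inj : injective (fun u : arrivals => [ffun t => increment u t]).
Proof.
move=> u v /ffunP uv; apply/ffunP.
suff eq_upto k (t : 'I_n.+1) : (t <= k)%N -> u t = v t.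
  by move=> t; apply: eq_upto (leqnn t).
elim: k t => [|k IH] t.
  rewrite leqn0 => /eqP t0; have := uv t.
  by rewrite !ffunE /increment (_ : t == ord0) ?subr0 //; apply/eqP/val_inj.
rewrite leq_eqVlt => /orP[/eqP tk|]; last by rewrite ltnS; apply: IH.
have t0 : (t == ord0) = false by rewrite -val_eqE /= tk.
have := uv t; rewrite !ffunE /increment t0 (IH (prev t)) ?prevE ?tk //.
by move=> /(congr1 (+%R^~ (v (prev t)))); rewrite !subrK.
Qed.

Lemma sum_chain_weight : \sum_u chain_weight u = 1.
Proof.
have sum_prod : \sum_(w : arrivals) \prod_t q t (w t) = 1.
  by rewrite -(bigA_distr_bigA q) /= big1.
rewrite (reindex_inj increment_inj) /= in sum_prod.
rewrite -[RHS]sum_prod; apply: eq_bigr => u _.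
by apply: eq_bigr => t _; rewrite ffunE.
Qed.

Lemma sum_chain_psi (P : pred {set 'I_n.+1}) u :
  \sum_(e in E | P e) chain_psi e u = \sum_(t | P (chain_edge t)) ln (q t (increment u t)).
Proof.
rewrite (exchange_big_dep (fun t => P (chain_edge t))) /=; last first.
  by move=> e t /andP[_ Pe] /eqP <-.
apply: eq_bigr => t Pt; rewrite (big_pred1 (chain_edge t)) // => e /=.
by rewrite inE /=; case: eqP => [->|]; rewrite ?Pt ?andbF.
Qed.

Lemma in_support_full (u : arrivals) : in_support Om u.
Proof. by apply/forallP => i; rewrite inE. Qed.

Lemma mrf_weight_chain u : mrf_weight Om psi1 E chain_psi u = chain_weight u.
Proof.
rewrite /mrf_weight in_support_full big1 // add0r.
have -> : \sum_(e in E) chain_psi e u = \sum_t ln (q t (increment u t)).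
  by rewrite -(sum_chain_psi predT); apply: eq_bigl => e; rewrite andbT.
rewrite expR_sum.
by apply: eq_bigr => t _; rewrite lnK // posrE.
Qed.

Lemma mrf_expect_chain (F : arrivals -> R) :
  mrf_expect Om psi1 E chain_psi F = \sum_u chain_weight u * F u.
Proof.
apply: eq_bigr => u _; rewrite /mrf_prob mrf_weight_chain.
by rewrite (eq_bigr _ (fun v _ => mrf_weight_chain v)) sum_chain_weight divr1.
Qed.

Lemma q_le1 t x : q t x <= 1.
Proof. by rewrite -(q_sum1 t) (bigD1 x) //= lerDl sumr_ge0 // => y _; apply: ltW. Qed.

Lemma chain_edge_mem (i t : 'I_n.+1) : i \in chain_edge t -> t \in [set i; inord i.+1].
Proof.
rewrite !inE => /orP[/eqP it|/eqP ->]; last by rewrite eqxx.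
case: (posnP t) => [t0|tp]; apply/orP; [left|right]; apply/eqP/val_inj.
  by rewrite /= t0 it prevE t0.
by rewrite /= it prevE prednK // inord_val.
Qed.

Lemma card_chain_edge_mem (i : 'I_n.+1) : (#|[pred t | i \in chain_edge t]| <= 2)%N.
Proof.
apply: leq_trans (_ : #|[set i; inord i.+1]| <= 2)%N; last by rewrite cards2; case: eqP.
by apply: subset_leq_card; apply/fintype.subsetP => t; apply: chain_edge_mem.
Qed.

Lemma chain_Delta_le (L : R) :
  (forall t x, `|ln (q t x)| <= L) -> mrf_Delta Om E chain_psi <= L *+ 2.
Proof.
move=> qL; have L0 : 0 <= L := le_trans (normr_ge0 _) (qL ord0 0).
apply: bigmax_le => [|i _]; first by rewrite mulrn_wge0.
apply: bigmax_le => [|u _]; first by rewrite mulrn_wge0.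
rewrite sum_chain_psi; apply: le_trans (ler_norm_sum _ _ _) _.
apply: le_trans (ler_sum _ (fun t _ => qL t (increment u t))) _.
by rewrite sumr_const ler_wpMn2l // card_chain_edge_mem.
Qed.

Lemma chain_Delta_ge (i : 'I_n.+1) (x : T) : - ln (q i x) <= mrf_Delta Om E chain_psi.
Proof.
pose u : arrivals := [ffun s : 'I_n.+1 => if (i <= s)%N then x else 0].
have ui : increment u i = x.
  rewrite /increment /u !ffunE leqnn; case: eqP => [_|/eqP i0]; first by rewrite subr0.
  rewrite prevE ifN ?subr0 // -ltnNge ltn_predL lt0n.
  by apply: contra i0 => /eqP i0; apply/eqP/val_inj.
apply: (bigmax_sup i) => //; apply: (bigmax_sup u); first exact: in_support_full.
rewrite sum_chain_psi (bigD1 i) /=; last by rewrite !inE eqxx orbT.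
rewrite ui ler_normr; apply/orP; right.
have : \sum_(t | (i \in chain_edge t) && (t != i)) ln (q t (increment u t)) <= 0.
  by apply: sumr_le0 => t _; apply: ln_le0 (q_le1 _ _).
lra.
Qed.

End IncrementChain.

Section OptCost.
Variables (R : realType) (T : finType) (n : nat) (d : T -> T -> R).
Hypothesis d_metric : is_metric d.

Local Notation unit_cost := (fun _ : T => 1 : R).

Lemma opt_cost_ge1 (u : {ffun 'I_n.+1 -> T}) : 1 <= opt_cost d unit_cost u.
Proof.
case: d_metric => d_ge0 _ _ _.
have sol_ge1 s : 1 <= sol_cost d unit_cost u s.
  have card_ge1 : (1 : R) <= #|[set s t | t : 'I_n.+1]|%:R.
    by rewrite ler1n card_gt0; apply/set0Pn; exists (s ord0); apply: imset_f.
  have : 0 <= \sum_t d (u t) (s t) by apply: sumr_ge0.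
  rewrite /sol_cost sumr_const; lra.
by apply: le_bigmin => [|s _]; apply: sol_ge1.
Qed.

Lemma opt_cost_le_size (u : {ffun 'I_n -> T}) : opt_cost d unit_cost u <= n%:R.
Proof.
case: d_metric => _ d0 _ _.
apply: le_trans (bigmin_le_id _ _ _ _) _.
rewrite /sol_cost sumr_const big1 ?addr0 => [|t _]; last exact/d0.
by rewrite ler_nat -[n in (_ <= n)%N]card_ord leq_imset_card.
Qed.

Lemma opt_cost_le_const (u : {ffun 'I_n -> T}) (c : T) :
  opt_cost d unit_cost u <= 1 + \sum_t d (u t) c.
Proof.
have card1 : (#|[set [ffun=> c] t | t : 'I_n]| <= 1)%N.
  rewrite -(cards1 c) subset_leq_card //.
  by apply/fintype.subsetP => _ /imsetP[t _ ->]; rewrite ffunE inE.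
apply: le_trans (bigmin_le _ [ffun _ => c] _) _.
rewrite /sol_cost sumr_const lerD ?lern1 //.
by under eq_bigr => t _ do rewrite ffunE.
Qed.

End OptCost.

Section Instance.
Variables (R : realType) (p : nat).

Local Notation m := p.+2.

Definition word := {ffun 'I_m -> 'I_m}.
HB.instance Definition _ := Finite.on word.
HB.instance Definition _ := GRing.Zmodule.on word.
Definition gamma := (m * m)%N.
(* The clients are the times [0 <= t < gamma ^ m.+1]; phase [k] is the time interval
   [gamma ^ k <= t < gamma ^ k.+1]. *)
Definition horizon := (gamma ^ m.+1).-1.

Local Notation n := horizon.+1.
Local Notation arrivals := {ffun 'I_n -> word}.

Lemma gamma_gt1 : (1 < gamma)%N.
Proof. rewrite /gamma; nia. Qed.

Lemma expgamma_gt0 k : (0 < gamma ^ k)%N.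
Proof. by rewrite expn_gt0 ltnW // gamma_gt1. Qed.

Lemma horizonE : n = (gamma ^ m.+1)%N.
Proof. by rewrite prednK // expgamma_gt0. Qed.

Lemma leq_expgamma_horizon k : (k <= m)%N -> (gamma ^ k.+1 <= n)%N.
Proof. by move=> km; rewrite horizonE leq_pexp2l // ltnW // gamma_gt1. Qed.

Definition phase (t : nat) : nat := trunc_log gamma t.

Lemma phase_lt t k : (0 < k)%N -> (t < gamma ^ k)%N -> (phase t < k)%N.
Proof.
move=> k0; case: t => [|t] tk; first by rewrite /phase trunc_log0.
rewrite -(ltn_exp2l _ _ gamma_gt1); apply: leq_ltn_trans tk.
exact: trunc_logP gamma_gt1 _.
Qed.

Lemma phase_le_m (t : 'I_n) : (phase t <= m)%N.
Proof. by rewrite -ltnS phase_lt // -horizonE. Qed.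

Definition phase_start (t : nat) : bool := (0 < t)%N && (phase t != phase t.-1).

Lemma phase_startS t : phase_start t -> phase t = (phase t.-1).+1.
Proof.
case/andP=> t0 ne; apply/eqP; rewrite eqn_leq ltn_neqAle eq_sym ne leq_trunc_log ?leq_pred //.
have := trunc_log_ltn t.-1 gamma_gt1; rewrite prednK // => lt1.
by rewrite -ltnS phase_lt // (leq_ltn_trans lt1) // ltn_exp2l // gamma_gt1.
Qed.

Lemma phase_start_pow t : phase_start t -> t = (gamma ^ phase t)%N.
Proof.
move=> st; have [t0 _] := andP st; apply/eqP; rewrite eqn_leq trunc_logP ?gamma_gt1 // andbT.
have := trunc_log_ltn t.-1 gamma_gt1; rewrite prednK //.
by rewrite -/(phase t.-1) -(phase_startS st).
Qed.

Lemma card_phase_start : (#|[pred t : 'I_n | phase_start t]| <= m)%N.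
Proof.
apply: leq_trans (_ : #|[set (inord (gamma ^ k.+1) : 'I_n) | k : 'I_m]| <= m)%N; last first.
  by rewrite -[m in (_ <= m)%N]card_ord leq_imset_card.
apply: subset_leq_card; apply/fintype.subsetP => t st.
have ph := phase_startS st; have ltm : (phase t.-1 < m)%N by rewrite -ph phase_le_m.
apply/imsetP; exists (Ordinal ltm) => //; apply/val_inj.
by rewrite /= -ph -(phase_start_pow st) inord_val.
Qed.

Definition coord_weight (j : nat) : R := (gamma%:R ^+ j.+2)^-1.

Lemma gammaR_gt1 : 1 < (gamma%:R : R).
Proof. by rewrite ltr1n gamma_gt1. Qed.

Lemma gammaR_neq0 : (gamma%:R : R) != 0.
Proof. by rewrite gt_eqF // (lt_trans ltr01 gammaR_gt1). Qed.

Lemma coord_weight_gt0 j : 0 < coord_weight j.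
Proof. by rewrite invr_gt0 exprn_gt0 // (lt_trans ltr01 gammaR_gt1). Qed.

Lemma coord_weight_anti j k : (k <= j)%N -> coord_weight j <= coord_weight k.
Proof.
move=> kj; rewrite lef_pV2 ?posrE ?exprn_gt0 ?(lt_trans ltr01 gammaR_gt1) //.
by rewrite ler_eXn2l // ?ltnS // gammaR_gt1.
Qed.

Lemma coord_weight_expgamma k : coord_weight k * (gamma ^ k.+1)%N%:R = gamma%:R^-1.
Proof.
rewrite /coord_weight natrX (exprS _ k.+1) invfM -mulrA mulVf ?mulr1 //.
by rewrite expf_neq0 ?gammaR_neq0.
Qed.

Definition dist : word -> word -> R := whamming (fun j : 'I_m => coord_weight j).

Lemma dist_metric : is_metric dist.
Proof. by apply: whamming_metric => j; apply: coord_weight_gt0. Qed.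

Lemma dist_ge0 x y : 0 <= dist x y.
Proof. by case: dist_metric => d0 _ _ _; apply: d0. Qed.

Definition eps : R := (n%:R ^+ 2)^-1.

Lemma horizonR_ge2 : 2 <= (n%:R : R).
Proof.
rewrite (ler_nat R 2) horizonE (leq_trans gamma_gt1) //.
by rewrite -{1}(expn1 gamma) leq_pexp2l // ltnW // gamma_gt1.
Qed.

Lemma eps_gt0 : 0 < eps.
Proof. by rewrite invr_gt0 exprn_gt0 // (lt_le_trans _ horizonR_ge2). Qed.

Lemma eps_horizon : (n%:R : R) * (n%:R * eps) = 1.
Proof.
by rewrite mulrA -expr2 mulfV // gt_eqF // exprn_gt0 // (lt_le_trans _ horizonR_ge2).
Qed.

Lemma horizon_eps : (n%:R : R) * eps <= 1 / 2.
Proof. have := eps_horizon; have := horizonR_ge2; have := eps_gt0; nra. Qed.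

Lemma eps_le1 : eps <= 1.
Proof. have := horizon_eps; have := horizonR_ge2; have := eps_gt0; nra. Qed.

Definition single (j : nat) (a : 'I_m) : word :=
  [ffun k : 'I_m => if val k == j then a else 0].

Definition jump_law (t : 'I_n) (x : word) : R :=
  if phase_start t then m%:R^-1 * \sum_a (x == single (phase t).-1 a)%:R
  else (x == 0)%:R.

Lemma jump_law_ge0 t x : 0 <= jump_law t x.
Proof.
rewrite /jump_law; case: ifP => _; last by rewrite ler0n.
by rewrite mulr_ge0 ?invr_ge0 ?ler0n // sumr_ge0 // => a _; rewrite ler0n.
Qed.

Lemma sum_jump_law t : \sum_x jump_law t x = 1.
Proof.
rewrite /jump_law; case: (phase_start t); last exact: sum_indicator.
rewrite -mulr_sumr exchange_big /=.
under eq_bigr => a _ do rewrite sum_indicator.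
by rewrite sumr_const card_ord mulVf // pnatr_eq0.
Qed.

Definition kernel (t : 'I_n) : word -> R := mix_uniform eps (jump_law t).

Lemma kernel_gt0 t x : 0 < kernel t x.
Proof. exact: mix_uniform_gt0 eps_gt0 eps_le1 (jump_law_ge0 t) (sum_jump_law t) x. Qed.

Lemma sum_kernel t : \sum_x kernel t x = 1.
Proof. exact: sum_mix_uniform (sum_jump_law t). Qed.

Definition Lambda : R := ln (#|word|%:R / eps).

Local Notation Delta :=
  (mrf_Delta (fun _ : 'I_n => [set: word]) [set: {set 'I_n}] (chain_psi kernel)).

Lemma Delta_le : Delta <= Lambda *+ 2.
Proof.
apply: chain_Delta_le => t x.
exact: norm_ln_mix_uniform eps_gt0 eps_le1 (jump_law_ge0 t) (sum_jump_law t) x.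
Qed.

Lemma Delta_ge : Lambda <= Delta.
Proof.
pose x : word := [ffun _ => ord_max].
have x0 : (x == 0) = false.
  by apply/negbTE/negP => /eqP /ffunP /(_ ord0); rewrite !ffunE => /(congr1 val).
apply: le_trans (chain_Delta_ge kernel_gt0 sum_kernel ord0 x).
rewrite /kernel /mix_uniform /jump_law /phase_start /= x0 mulr0 add0r.
have w0 : (0 : R) < #|word|%:R by rewrite ltr0n; apply/card_gt0P; exists 0.
by rewrite /Lambda -invf_div lnV // posrE divr_gt0 // eps_gt0.
Qed.

Lemma LambdaE : Lambda = ln (m%:R : R) * (5 * m%:R + 4).
Proof.
rewrite /Lambda /eps invrK card_ffun !card_ord horizonE -natrX -natrM.
have -> : (m ^ m * (gamma ^ m.+1) ^ 2 = m ^ (5 * m + 4))%N.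
  by rewrite /gamma expnMn -expnD -expnM -expnD; congr (m ^ _)%N; lia.
by rewrite natrX lnXn ?ltr0n // -(mulr_natr (ln (m%:R : R)) (5 * m + 4)) natrD natrM.
Qed.

Definition prefix (k : nat) (c : word) : word :=
  [ffun j : 'I_m => if (j < k)%N then c j else 0].

Definition walk (c : word) : arrivals := [ffun t : 'I_n => prefix (phase t) c].

Lemma prefix0 (c : word) : prefix 0 c = 0.
Proof. by apply/ffunP => j; rewrite !ffunE. Qed.

Lemma prefix_full (c : word) : prefix m c = c.
Proof. by apply/ffunP => j; rewrite !ffunE ltn_ord. Qed.

Lemma prefixSB k (c : word) : (k < m)%N -> prefix k.+1 c - prefix k c = single k (c (inord k)).
Proof.
move=> km; apply/ffunP => j; rewrite !ffunE.
case: (ltngtP j k) => [jk|kj|jk].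
- by rewrite ltnS ltnW // subrr.
- by rewrite ltnNge kj subr0.
- by rewrite jk ltnSn subr0; congr (c _); apply: val_inj; rewrite /= inordK // -jk.
Qed.

Lemma prefix_add_single k j a (c : word) :
  (k <= j)%N -> prefix k (single j a + c) = prefix k c.
Proof.
move=> kj; apply/ffunP => i; rewrite !ffunE; case: ifP => // ik.
by case: eqP => [ij|_]; [move: ik; rewrite ij ltnNge kj | rewrite add0r].
Qed.

Lemma phase_horizon : phase horizon = m.
Proof.
apply: trunc_log_eq gamma_gt1 _; apply/andP; split; last by rewrite horizonE.
by rewrite -ltnS horizonE ltn_exp2l // gamma_gt1.
Qed.

Lemma walk_inj : injective walk.
Proof.
by move=> c1 c2 /ffunP /(_ ord_max); rewrite !ffunE /= phase_horizon !prefix_full.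
Qed.

Lemma jump_law_walk (c : word) (t : 'I_n) :
  (if phase_start t then m%:R^-1 else 1) <= jump_law t (increment (walk c) t).
Proof.
rewrite /jump_law /increment !ffunE.
have [->|t0] := eqVneq t ord0.
  by rewrite /phase_start /= /phase trunc_log0 prefix0 subr0 eqxx.
have tpos : (0 < t)%N by rewrite lt0n; apply: contra t0 => /eqP t0; apply/eqP/val_inj.
rewrite prevE; case st : (phase_start t).
  have ph := phase_startS st.
  have km : (phase t.-1 < m)%N by rewrite -ph phase_le_m.
  rewrite ph prefixSB //= (bigD1 (c (inord (phase t.-1)))) //= eqxx mulr1n.
  rewrite -[X in X <= _]mulr1 ler_wpM2l ?invr_ge0 ?ler0n // lerDl.
  by apply: sumr_ge0 => a _; rewrite ler0n.
have -> : phase t = phase t.-1 by move: st; rewrite /phase_start tpos /= => /negbFE /eqP.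
by rewrite subrr eqxx.
Qed.

Definition walk_weight_lb : R := (1 - eps) ^+ n * (m%:R^-1) ^+ m.

Lemma walk_weight_lb_ge0 : 0 <= walk_weight_lb.
Proof. by rewrite mulr_ge0 ?exprn_ge0 ?invr_ge0 ?ler0n ?subr_ge0 ?eps_le1. Qed.

Lemma walk_weight_lbE : walk_weight_lb * #|word|%:R = (1 - eps) ^+ n.
Proof.
rewrite /walk_weight_lb card_ffun !card_ord natrX -mulrA -exprMn mulVf ?pnatr_eq0 //.
by rewrite expr1n mulr1.
Qed.

Lemma chain_weight_walk (c : word) : walk_weight_lb <= chain_weight kernel (walk c).
Proof.
have y0 : (0 : R) <= m%:R^-1 by rewrite invr_ge0 ler0n.
have y1 : (m%:R : R)^-1 <= 1 by rewrite invf_le1 ?ler1n ?ltr0n.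
have e0 : 0 <= 1 - eps by rewrite subr_ge0 eps_le1.
pose h t : R := if phase_start t then m%:R^-1 else 1.
have h0 t : 0 <= h t by rewrite /h; case: ifP.
have : \prod_(t : 'I_n) ((1 - eps) * h t) <= chain_weight kernel (walk c).
  apply: ler_prod => t _; rewrite mulr_ge0 //=.
  apply: le_trans (mix_uniform_geM _ eps_gt0 _).
  by rewrite ler_wpM2l // jump_law_walk.
apply: le_trans; rewrite big_split /= prodr_const card_ord ler_wpM2l ?exprn_ge0 //.
rewrite /h -big_mkcond /= prodr_const.
by apply: ler_wiXn2l; rewrite ?y0 ?y1 ?card_phase_start.
Qed.

Lemma dist_prefix k (c : word) : dist (prefix k c) c <= m%:R * coord_weight k.
Proof.
apply: le_trans (_ : \sum_(j : 'I_m) coord_weight k <= _); last first.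
  by rewrite sumr_const card_ord mulr_natl.
rewrite /dist /whamming big_mkcond /=; apply: ler_sum => j _.
case: ifP => [|_]; last exact: ltW (coord_weight_gt0 k).
rewrite ffunE; case: ltnP => [_|kj]; first by rewrite eqxx.
by rewrite coord_weight_anti.
Qed.

Lemma sum_coord_weight_phase :
  \sum_(t : 'I_n) coord_weight (phase t) <= m.+1%:R * gamma%:R^-1.
Proof.
have le_sum (t : 'I_n) :
    coord_weight (phase t) <= \sum_(k < m.+1) (t < gamma ^ k.+1)%N%:R * coord_weight k.
  have hk : (phase t < m.+1)%N by rewrite ltnS phase_le_m.
  rewrite (bigD1 (Ordinal hk)) //= trunc_log_ltn ?gamma_gt1 // mul1r lerDl.
  by apply: sumr_ge0 => k _; rewrite mulr_ge0 ?ler0n // ltW // coord_weight_gt0.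
apply: le_trans (ler_sum _ (fun t _ => le_sum t)) _.
have -> : (m.+1%:R : R) * gamma%:R^-1 = \sum_(k < m.+1) gamma%:R^-1.
  by rewrite sumr_const card_ord mulr_natl.
rewrite exchange_big /=; apply: ler_sum => k _.
rewrite -mulr_suml -(coord_weight_expgamma k) [X in _ <= X]mulrC.
rewrite ler_wpM2r ?(ltW (coord_weight_gt0 _)) // -natr_sum ler_nat.
have e := sum_ord_range n (leq0n (gamma ^ k.+1)); rewrite minn0 subn0 in e.
by rewrite [X in (X <= _)%N]e geq_minr.
Qed.

Lemma opt_cost_walk (c : word) : opt_cost dist (fun _ => 1) (walk c) <= 3.
Proof.
apply: le_trans (opt_cost_le_const dist (walk c) c) _.
suff : \sum_t dist (walk c t) c <= 2 by lra.
apply: le_trans (_ : \sum_(t : 'I_n) m%:R * coord_weight (phase t) <= _).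
  by apply: ler_sum => t _; rewrite ffunE dist_prefix.
rewrite -mulr_sumr; apply: le_trans (ler_wpM2l (ler0n _ m) sum_coord_weight_phase) _.
rewrite /gamma natrM -(natr1 m).
have -> : (m%:R : R) * ((m%:R + 1) * (m%:R * m%:R)^-1) = 1 + m%:R^-1.
  by field; rewrite -natrD pnatr_eq0.
have : (m%:R : R)^-1 <= 1 by rewrite invf_le1 ?ltr0n // ler1n.
set y := (m%:R : R)^-1; lra.
Qed.

Local Notation expect := (mrf_expect (fun _ : 'I_n => [set: word]) (fun _ _ => 0)
  [set: {set 'I_n}] (chain_psi kernel)).

Lemma chain_weight_ge0 (u : arrivals) : 0 <= chain_weight kernel u.
Proof. by apply: prodr_ge0 => t _; apply: ltW (kernel_gt0 _ _). Qed.

Lemma walk_mass : 1 - n%:R * eps <= \sum_(u in [set walk c | c : word]) chain_weight kernel u.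
Proof.
apply: le_trans (bernoulli_ineq _ _) _; first by rewrite eps_le1 ltW ?eps_gt0.
apply: le_trans (_ : \sum_(c : word) walk_weight_lb <= _).
  by rewrite sumr_const -mulr_natr walk_weight_lbE.
rewrite big_imset /=; last by move=> c1 c2 _ _; apply: walk_inj.
by apply: ler_sum => c _; apply: chain_weight_walk.
Qed.

Lemma expect_opt_le : expect (opt_cost dist (fun _ => 1)) <= 4.
Proof.
set G := [set walk c | c : word].
rewrite (mrf_expect_chain kernel_gt0 sum_kernel) (bigID (mem G)) /=.
set a := \sum_(u in G) chain_weight kernel u.
set b := \sum_(u | u \notin G) chain_weight kernel u.
have ab : a + b = 1 by rewrite -(sum_chain_weight sum_kernel) (bigID (mem G)).
have bn : n%:R * b <= n%:R * (n%:R * eps).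
  by rewrite ler_wpM2l ?ler0n //; have := walk_mass; rewrite -/a; lra.
have opt_in : \sum_(u in G) chain_weight kernel u * opt_cost dist (fun _ => 1) u <= a * 3.
  rewrite mulr_suml; apply: ler_sum => _ /imsetP[c _ ->].
  by rewrite ler_wpM2l ?chain_weight_ge0 ?opt_cost_walk.
have opt_out : \sum_(u | u \notin G) chain_weight kernel u * opt_cost dist (fun _ => 1) u
    <= b * n%:R.
  rewrite mulr_suml; apply: ler_sum => u _.
  by rewrite ler_wpM2l ?chain_weight_ge0 //; apply: opt_cost_le_size dist_metric u.
have a0 : 0 <= b by apply: sumr_ge0 => u _; apply: chain_weight_ge0.
have := eps_horizon; nra.
Qed.

Lemma expect_opt_gt0 : 0 < expect (opt_cost dist (fun _ => 1)).
Proof.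
rewrite (mrf_expect_chain kernel_gt0 sum_kernel).
apply: lt_le_trans ltr01 _; rewrite -[X in X <= _](sum_chain_weight sum_kernel).
apply: ler_sum => u _; rewrite -[X in X <= _]mulr1 ler_wpM2l ?chain_weight_ge0 //.
exact: opt_cost_ge1 dist_metric _.
Qed.

Definition phase_end (k : nat) : 'I_n := inord (gamma ^ k.+1).-1.

Lemma phase_endE k : (k <= m)%N -> phase_end k = (gamma ^ k.+1).-1 :> nat.
Proof. by move=> km; rewrite inordK // prednK ?expgamma_gt0 // leq_expgamma_horizon. Qed.

Lemma leq_phase_end j k : (j <= k)%N -> (k <= m)%N -> (phase_end j <= phase_end k)%N.
Proof.
move=> jk km; rewrite !phase_endE // ?(leq_trans jk) //.
by rewrite -ltnS !prednK ?expgamma_gt0 // leq_pexp2l // ltnW // gamma_gt1.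
Qed.

Lemma phase_lt_phase_end t k : (k <= m)%N -> (t <= phase_end k)%N -> (phase t < k.+1)%N.
Proof.
move=> km; rewrite phase_endE // -ltnS prednK ?expgamma_gt0 //.
exact: phase_lt.
Qed.

Lemma sum_phase_coord_weight (k : nat) : (k < m)%N ->
  \sum_(t : 'I_n) (gamma ^ k.+1 <= t < gamma ^ k.+2)%N%:R * coord_weight k = 1 - gamma%:R^-1.
Proof.
move=> km.
have le12 : (gamma ^ k.+1 <= gamma ^ k.+2)%N by rewrite leq_pexp2l // ltnW // gamma_gt1.
rewrite -mulr_suml -natr_sum sum_ord_range //.
rewrite !(minn_idPr (leq_expgamma_horizon _)) ?(ltnW km) // natrB // mulrBl.
rewrite [X in X - _]mulrC [X in _ - X]mulrC coord_weight_expgamma.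
by rewrite /coord_weight natrX mulVf // expf_neq0 ?gammaR_neq0.
Qed.

Lemma sum_walk (F : arrivals -> R) :
  \sum_(u in [set walk c | c : word]) F u = \sum_(c : word) F (walk c).
Proof. by rewrite big_imset // => c1 c2 _ _; apply: walk_inj. Qed.

Section OnlineAlgorithm.
Variable A : online_alg word n.

Local Notation conn_cost c := (\sum_t dist (walk c t) (conn A (walk c) t)).

Definition opened_by (k : nat) (c : word) : {set word} := opened A (walk c) (phase_end k).

Definition opens_in (j : nat) (c : word) : bool :=
  ~~ (opened_by j.+1 c \subset opened_by j c).

Definition guessed (j : 'I_m) (c : word) : bool := [exists y in opened_by j c, y j == c j].

Definition phase_conn_cost (j : 'I_m) (c : word) : R :=
  \sum_(t : 'I_n | phase t == j.+1) dist (walk c t) (conn A (walk c) t).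

Lemma opened_by_mono j k c : (j <= k)%N -> (k <= m)%N -> opened_by j c \subset opened_by k c.
Proof. by move=> jk km; apply: alg_monotone; apply: leq_phase_end. Qed.

Lemma sum_opens_in_le k c : (k <= m)%N -> (\sum_(j < k) opens_in j c <= #|opened_by k c|)%N.
Proof.
elim: k => [|k IH] km; first by rewrite big_ord0.
rewrite big_ord_recr /=; have km' := ltnW km.
have sub : opened_by k c \subset opened_by k.+1 c by apply: opened_by_mono.
case nj : (opens_in k c); last by rewrite addn0 (leq_trans (IH km')) ?subset_leq_card.
by rewrite addn1 (leq_ltn_trans (IH km')) // proper_card // properE sub.
Qed.

Lemma alg_cost_walk c : alg_cost dist (fun _ => 1) A (walk c) =
  #|\bigcup_(t : 'I_n) opened A (walk c) t|%:R + conn_cost c.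
Proof. by rewrite /alg_cost sumr_const. Qed.

Lemma card_opened_by_le k c :
  (#|opened_by k c| <= #|\bigcup_(t : 'I_n) opened A (walk c) t|)%N.
Proof. by apply/subset_leq_card/(finset.bigcup_sup (phase_end k)). Qed.

Lemma conn_cost_ge0 c : 0 <= conn_cost c.
Proof. by apply: sumr_ge0 => t _; apply: dist_ge0. Qed.

Lemma sum_phase_conn_cost_le c : \sum_(j : 'I_m) phase_conn_cost j c <= conn_cost c.
Proof.
rewrite /phase_conn_cost; under eq_bigr => j _ do rewrite big_mkcond /=.
rewrite exchange_big /=; apply: ler_sum => t _; rewrite -big_mkcond /=.
case: (posnP (phase t)) => [p0|pp].
  by rewrite big_pred0 ?dist_ge0 // => j; rewrite p0.
have hj : ((phase t).-1 < m)%N by rewrite prednK // phase_le_m.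
rewrite (big_pred1 (Ordinal hj)) // => j /=.
by rewrite -val_eqE /=; apply/eqP/eqP => [->|->]; rewrite ?prednK.
Qed.

(* The clients of phase [j+1] carry letter [c j] but are served by facilities already open
   at the end of phase [j], none of which carries it. *)
Lemma dist_conn_unguessed (j : 'I_m) c (t : 'I_n) :
  ~~ guessed j c -> ~~ opens_in j c -> (gamma ^ j.+1 <= t < gamma ^ j.+2)%N ->
  coord_weight j <= dist (walk c t) (conn A (walk c) t).
Proof.
move=> ng no tj; have pt : phase t = j.+1 := trunc_log_eq gamma_gt1 tj.
have jm : (j.+1 <= m)%N := ltn_ord j.
have conn_in : conn A (walk c) t \in opened_by j c.
  have s1 : opened A (walk c) t \subset opened_by j.+1 c.
    apply: alg_monotone; rewrite phase_endE // -ltnS prednK ?expgamma_gt0 //.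
    by case/andP: tj.
  have s2 : opened_by j.+1 c \subset opened_by j c by move: no; rewrite negbK.
  exact: (fintype.subsetP s2) _ ((fintype.subsetP s1) _ (alg_served A (walk c) t)).
apply: (whamming_ge (fun i : 'I_m => coord_weight_gt0 i) (j := j)).
rewrite !ffunE pt ltnSn.
apply: contra ng => /eqP e; apply/existsP; exists (conn A (walk c) t).
by rewrite conn_in -e eqxx.
Qed.

Lemma phase_conn_cost_ge (j : 'I_m) c :
  ~~ guessed j c -> ~~ opens_in j c -> 1 / 2 <= phase_conn_cost j c.
Proof.
move=> ng no.
apply: le_trans
  (_ : \sum_(t : 'I_n) (gamma ^ j.+1 <= t < gamma ^ j.+2)%N%:R * coord_weight j <= _).
  rewrite sum_phase_coord_weight //.
  have : 2 <= (gamma%:R : R) by rewrite (ler_nat R 2) gamma_gt1.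
  have : (gamma%:R : R) * gamma%:R^-1 = 1 by rewrite mulfV ?gammaR_neq0.
  set y := (gamma%:R : R)^-1; nra.
rewrite /phase_conn_cost [X in _ <= X]big_mkcond /=; apply: ler_sum => t _.
case tj : (gamma ^ j.+1 <= t < gamma ^ j.+2)%N; last first.
  by rewrite mul0r; case: ifP => _ //; apply: dist_ge0.
have pt : phase t = j.+1 := trunc_log_eq gamma_gt1 tj.
by rewrite pt eqxx mul1r dist_conn_unguessed.
Qed.

Lemma alg_cost_walk_ge c :
  (m%:R - \sum_(j : 'I_m) (guessed j c)%:R) / 2 <= alg_cost dist (fun _ => 1) A (walk c).
Proof.
have opens : ((\sum_(j < m) opens_in j c)%N%:R : R)
    <= #|\bigcup_(t : 'I_n) opened A (walk c) t|%:R.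
  by rewrite ler_nat (leq_trans (sum_opens_in_le c (leqnn m))) ?card_opened_by_le.
have per_phase (j : 'I_m) :
    (1 - (guessed j c)%:R) / 2 <= (opens_in j c)%:R + phase_conn_cost j c.
  have d0 : 0 <= phase_conn_cost j c by apply: sumr_ge0 => t _; apply: dist_ge0.
  case gj : (guessed j c); first by rewrite subrr mul0r addr_ge0.
  case oj : (opens_in j c); first by rewrite /=; lra.
  by have := phase_conn_cost_ge (negbT gj) (negbT oj); rewrite /=; lra.
have -> : (m%:R - \sum_(j : 'I_m) (guessed j c)%:R) / 2
    = \sum_(j : 'I_m) ((1 - (guessed j c)%:R) / 2) :> R.
  by rewrite -mulr_suml sumrB sumr_const card_ord.
apply: le_trans (ler_sum _ (fun j _ => per_phase j)) _.
rewrite alg_cost_walk big_split /= -natr_sum.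
have := sum_phase_conn_cost_le c; lra.
Qed.

Lemma opened_by_add_single (j : 'I_m) a (c : word) :
  opened_by j (single j a + c) = opened_by j c.
Proof.
suff same_prefix : forall s : 'I_n, (s <= phase_end j)%N -> walk (single j a + c) s = walk c s.
  by case: (alg_causal A same_prefix).
move=> s sj; rewrite !ffunE prefix_add_single // -ltnS.
exact: phase_lt_phase_end (ltnW (ltn_ord j)) sj.
Qed.

Lemma single_id (j : 'I_m) a : single j a j = a.
Proof. by rewrite ffunE eqxx. Qed.

(* Shifting letter [j] of [c] does not change [opened_by j c], and each of its facilities
   agrees with exactly one of the [m] shifts. *)
Lemma sum_guessed_le (j : 'I_m) :
  m%:R * \sum_(c : word) ((guessed j c)%:R : R) <= \sum_(c : word) (#|opened_by j c|%:R : R).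
Proof.
pose hits (c : word) : R := \sum_(y in opened_by j c) ((y j == c j)%:R : R).
have guessed_le c : ((guessed j c)%:R : R) <= hits c.
  case gj : (guessed j c); last by apply: sumr_ge0 => y _; rewrite ler0n.
  case/existsP: gj => y /andP[yin /eqP yj].
  rewrite /hits (bigD1 y) //= yj eqxx lerDl.
  by apply: sumr_ge0 => z _; rewrite ler0n.
have shift_invariant (a : 'I_m) :
    \sum_(c : word) hits c = \sum_(c : word) hits (single j a + c).
  by rewrite (reindex_inj (addrI (single j a))).
have sum_shifts c : \sum_(a : 'I_m) hits (single j a + c) = #|opened_by j c|%:R.
  rewrite /hits; under eq_bigr => a _ do rewrite opened_by_add_single ffunE single_id.
  rewrite exchange_big /= -sumr_const; apply: eq_bigr => y _.
  under eq_bigr => a _ do rewrite -subr_eq eq_sym.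
  exact: sum_indicator.
apply: le_trans (ler_wpM2l (ler0n _ m) (ler_sum _ (fun c _ => guessed_le c))) _.
have -> : m%:R * \sum_(c : word) hits c
    = \sum_(a : 'I_m) \sum_(c : word) hits (single j a + c).
  by rewrite -(eq_bigr _ (fun a _ => shift_invariant a)) sumr_const card_ord mulr_natl.
by rewrite exchange_big /=; apply: ler_sum => c _; rewrite sum_shifts.
Qed.

Lemma card_opened_by_le_alg_cost k c :
  (#|opened_by k c|%:R : R) <= alg_cost dist (fun _ => 1) A (walk c).
Proof.
rewrite alg_cost_walk -[X in X <= _]addr0 lerD ?conn_cost_ge0 //.
by rewrite ler_nat card_opened_by_le.
Qed.

Lemma sum_alg_cost_walk_ge :
  m%:R * #|word|%:R / 3 <= \sum_(c : word) alg_cost dist (fun _ => 1) A (walk c).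
Proof.
set S := \sum_(c : word) _.
set P := \sum_(j : 'I_m) \sum_(c : word) ((guessed j c)%:R : R).
have half_le : (m%:R * #|word|%:R - P) / 2 <= S.
  apply: le_trans (ler_sum _ (fun c _ => alg_cost_walk_ge c)).
  by rewrite -mulr_suml sumrB sumr_const /P exchange_big /= mulr_natr.
have mP : m%:R * P <= m%:R * S.
  have -> : m%:R * S = \sum_(j : 'I_m) S by rewrite sumr_const card_ord mulr_natl.
  rewrite mulr_sumr.
  apply: ler_sum => j _; apply: le_trans (sum_guessed_le j) _.
  by apply: ler_sum => c _; apply: card_opened_by_le_alg_cost.
have : P <= S by rewrite -(ler_pM2l (ltr0n _ m)).
lra.
Qed.

End OnlineAlgorithm.

Lemma expect_alg_ge (A : online_alg word n) :
  m%:R / 6 <= expect (alg_cost dist (fun _ => 1) A).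
Proof.
have alg0 u : 0 <= alg_cost dist (fun _ => 1) A u.
  by apply: addr_ge0; apply: sumr_ge0 => x _; [apply: ler01 | apply: dist_ge0].
rewrite (mrf_expect_chain kernel_gt0 sum_kernel) (bigID (mem [set walk c | c : word])) /=.
rewrite sum_walk -[X in X <= _]addr0 lerD //; last first.
  by apply: sumr_ge0 => u _; rewrite mulr_ge0 ?chain_weight_ge0.
apply: le_trans (ler_sum _ (fun c _ => ler_wpM2r (alg0 _) (chain_weight_walk c))).
rewrite -mulr_sumr; apply: le_trans (ler_wpM2l walk_weight_lb_ge0 (sum_alg_cost_walk_ge A)).
have half : 1 / 2 <= (1 - eps) ^+ n.
  apply: le_trans (bernoulli_ineq _ _); last by rewrite eps_le1 ltW ?eps_gt0.
  by have := horizon_eps; lra.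
have -> : walk_weight_lb * (m%:R * #|word|%:R / 3) = (1 - eps) ^+ n * m%:R / 3.
  by rewrite -walk_weight_lbE; ring.
have : 1 / 2 * m%:R <= (1 - eps) ^+ n * m%:R by rewrite ler_wpM2r ?ler0n.
lra.
Qed.

Lemma ln_m_ge_half : 1 / 2 <= ln (m%:R : R).
Proof.
by apply: le_trans (ln2_ge_half R) _; rewrite ler_ln ?posrE ?ltr0n // (ler_nat R 2).
Qed.

Lemma m_le_Lambda : m%:R <= Lambda.
Proof.
rewrite LambdaE.
have := ln_m_ge_half; have : (0 : R) <= m%:R by rewrite ler0n.
nra.
Qed.

Lemma m_le_Delta : m%:R <= Delta.
Proof. exact: le_trans m_le_Lambda Delta_ge. Qed.

Lemma Delta_over_ln_le : Delta / ln Delta <= 18 * m%:R.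
Proof.
have m1 : (1 : R) <= m%:R by rewrite ler1n.
have l0 := ln_m_ge_half.
have mD := m_le_Delta.
have lnD : ln (m%:R : R) <= ln Delta by rewrite ler_ln ?posrE ?ltr0n //; lra.
rewrite ler_pdivrMr; last by lra.
have := Delta_le; rewrite LambdaE mulr2n.
have : 18 * m%:R * ln (m%:R : R) <= 18 * m%:R * ln Delta by rewrite ler_wpM2l //; lra.
nra.
Qed.

Lemma ratio_times_expect_opt_le :
  1 / 432 * (Delta / ln Delta) * expect (opt_cost dist (fun _ => 1)) <= m%:R / 6.
Proof.
have := Delta_over_ln_le; have := expect_opt_gt0; have := expect_opt_le.
have : (0 : R) <= m%:R by rewrite ler0n.
nra.
Qed.

End Instance.

Theorem corollary5p4 (R : realType) :
  exists c : R, 0 < c /\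
  forall D0 : R,
  exists (n : nat) (T : finType) (d : T -> T -> R) (f : T -> R)
         (Om : 'I_n -> {set T}) (psi1 : 'I_n -> T -> R)
         (E : {set {set 'I_n}}) (psiE : {set 'I_n} -> {ffun 'I_n -> T} -> R),
    [/\ is_metric d, (forall x, 0 <= f x), (forall i, Om i != finset.set0),
        psi_local psiE &
        let Delta := mrf_Delta Om E psiE in
        let EOPT := mrf_expect Om psi1 E psiE (opt_cost d f) in
        [/\ D0 <= Delta, 1 < Delta, 0 < EOPT &
            (* every randomized online algorithm: a probability distribution mu
               over deterministic online algorithms A s *)
            forall (S : finType) (mu : S -> R) (A : S -> online_alg T n),
              (forall s, 0 <= mu s) -> \sum_(s : S) mu s = 1 ->
              c * (Delta / ln Delta) * EOPT
                <= \sum_(s : S) mu s * mrf_expect Om psi1 E psiE (alg_cost d f (A s))]].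
Proof.
exists (1 / 432); split=> // D0; have [p D0_le] := exists_natS2_ge D0.
exists (horizon p).+1, (word p), (@dist R p), (fun _ => 1), (fun _ => [set: word p]),
  (fun _ _ => 0), [set: {set 'I_(horizon p).+1}], (chain_psi (@kernel R p)).
split=> [||i||]; first exact: dist_metric.
- by move=> x; apply: ler01.
- by apply/set0Pn; exists 0; rewrite inE.
- exact: chain_psi_local.
split=> [||| S mu A mu_ge0 mu_sum1]; first exact: le_trans D0_le (m_le_Delta R p).
- by apply: lt_le_trans (m_le_Delta R p); rewrite ltr1n.
- exact: expect_opt_gt0.
apply: le_trans (ratio_times_expect_opt_le R p) _.
apply: le_trans (_ : \sum_s mu s * (p.+2%:R / 6) <= _).
  by rewrite -mulr_suml mu_sum1 mul1r.
by apply: ler_sum => s _; apply: ler_wpM2l; [apply: mu_ge0 | apply: expect_alg_ge].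
Qed.
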